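(* Let $\mathcal I=\mathbb R^d$ with the standard inner product, let $\mathcal G$ be a compact Abelian group with normalized Haar measure $dg$, acting on $\mathcal I$ by a unitary representation $I\mapsto gI$. Let $\mathcal T=\mathcal S$ be the unit sphere of $\mathcal I$. For $I\in\mathcal I$ let $\rho_I$ be the law of the random variable $g\mapsto gI$ on $(\mathcal G,dg)$, i.e. $\rho_I(A)=\int_{\{g:\,gI\in A\}}dg$. For $t\in\mathcal T$ and a probability measure $\rho$ on $\mathcal I$, let $\rho^t$ be the probability measure on $\mathbb R$ given by $\rho^t(B)=\rho(\pi_t^{-1}(B))$, where $\pi_t(I)=\langle I,t\rangle$. Define the Tomographic Probabilistic representation $\Psi$, mapping each $I\in\mathcal I$ to the function $\mathcal T\to\mathcal P(\mathbb R)$ given by $\Psi(I)(t)=(\rho_I)^t$. Then for all $I,I'\in\mathcal I$, $$I\sim I'\iff \Psi(I)=\Psi(I').$$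
   Context: $\mathcal P(\mathbb R)$ denotes the set of Borel probability measures on $\mathbb R$. $I\sim I'$ means there exists $g\in\mathcal G$ with $gI=I'$. *)

From HB Require Import structures.
From mathcomp Require Import all_boot all_order all_algebra.
From mathcomp Require Import all_classical all_reals all_analysis.
Set Implicit Arguments. Unset Strict Implicit. Unset Printing Implicit Defensive.
Import Order.TTheory GRing.Theory Num.Theory.
Import numFieldNormedType.Exports.
Local Open Scope classical_set_scope.
Local Open Scope ring_scope.

(* G viewed as a pointed type (base point 0), needed to form its Borel
   sigma-algebra with the library's g_sigma_algebraType *)
Definition zpt (G : topologicalZmodType) : Type := G.
HB.instance Definition _ (G : topologicalZmodType) := Choice.on (zpt G).
HB.instance Definition _ (G : topologicalZmodType) :=
  isPointed.Build (zpt G) (0%R : G).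
Notation borelType G := (@g_sigma_algebraType (zpt G) (@open G)).

Definition inner (R : realType) (d : nat) (x y : 'cV[R]_d) : R :=
  \sum_(i < d) x i 0 * y i 0.

Definition sphere (R : realType) (d : nat) : set 'cV[R]_d :=
  [set t | inner t t = 1].

Definition unitary_rep (R : realType) (d : nat) (G : topologicalZmodType)
    (rep : G -> 'M[R]_d) : Prop :=
  [/\ rep 0 = 1%:M,
      (forall g h, rep (g + h) = rep g *m rep h),
      (forall g, (rep g)^T *m rep g = 1%:M) &
      (forall i j, continuous (fun g => rep g i j))].

(* normalized Haar measure on a compact (Hausdorff) abelian group G:
   a translation-invariant Radon probability measure on the Borel sets of G *)
Definition haar_prob (R : realType) (G : topologicalZmodType)
    (mu : probability (borelType G) R) : Prop :=
  [/\ (forall (g : G) (A : set (borelType G)), measurable A ->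
         mu ((fun h : G => g + h) @^-1` A) = mu A),
      (forall U : set (borelType G), open (U : set G) ->
         mu U = ereal_sup [set mu K | K in [set K : set (borelType G) |
                                         compact (K : set G) /\ K `<=` U]]) &
      (forall A : set (borelType G), measurable A ->
         mu A = ereal_inf [set mu U | U in [set U : set (borelType G) |
                                         open (U : set G) /\ A `<=` U]])].

Definition rho (R : realType) (d : nat) (G : topologicalZmodType)
    (mu : probability (borelType G) R) (rep : G -> 'M[R]_d) (I : 'cV[R]_d)
    : set 'cV[R]_d -> \bar R :=
  fun A => mu ((fun g : borelType G => rep g *m I) @^-1` A).

Definition proj (R : realType) (d : nat) (rh : set 'cV[R]_d -> \bar R)
    (t : 'cV[R]_d) : set R -> \bar R :=
  fun B => rh ((fun I => inner I t) @^-1` B).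

Definition Psi (R : realType) (d : nat) (G : topologicalZmodType)
    (mu : probability (borelType G) R) (rep : G -> 'M[R]_d) (I : 'cV[R]_d)
    : 'cV[R]_d -> set R -> \bar R :=
  fun t => proj (rho mu rep I) t.

(* Psi(I) = Psi(I') as maps T -> P(R): equal on every t in the sphere,
   as (Borel probability) measures, i.e. on every Borel set of R *)
Definition Psi_eq (R : realType) (d : nat) (G : topologicalZmodType)
    (mu : probability (borelType G) R) (rep : G -> 'M[R]_d) (I I' : 'cV[R]_d)
    : Prop :=
  forall t, sphere t -> forall B : set R, measurable B ->
    Psi mu rep I t B = Psi mu rep I' t B.

Definition orbit_equiv (R : realType) (d : nat) (G : Type)
    (rep : G -> 'M[R]_d) (I I' : 'cV[R]_d) : Prop :=
  exists g, rep g *m I = I'.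

(* If [g I = J], translation invariance of the Haar measure transports the law of
   [h |-> h I] onto that of [h |-> h J], so [Psi I = Psi J].  Conversely, fix a unit
   vector [t] and [a < <J, t>].  The set of [h] with [a < <h J, t>] is open and
   contains [0]; an invariant probability on a compact group charges every nonempty
   open set (finitely many translates of it cover the group), and [Psi I = Psi J]
   says that the corresponding set for [I] has the same measure, so some [h] has
   [a < <h I, t>].  Taking [t = J/|J|] gives [|J| <= |I|], hence [|I| = |J|] by
   symmetry and [sup_h <h I, J> = |J|^2]; the continuous function
   [h |-> |h I - J|^2] then attains its infimum [0] on the compact group. *)
From HB Require Import structures.
From mathcomp Require Import all_boot all_order all_algebra.
From mathcomp Require Import all_classical all_reals all_analysis.
From mathcomp Require Import ring lra measurable_realfun finmap.
Import Order.TTheory GRing.Theory Num.Theory.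
Import numFieldNormedType.Exports.
Local Open Scope classical_set_scope.
Local Open Scope ring_scope.

Section inner_product.
Context {R : realType} {d : nat}.
Implicit Types (x y : 'cV[R]_d) (M : 'M[R]_d).

Lemma innerE x y : inner x y = (x^T *m y) 0 0.
Proof. by rewrite /inner mxE; apply: eq_bigr => i _; rewrite mxE. Qed.

Lemma innerC x y : inner x y = inner y x.
Proof. by apply: eq_bigr => i _; rewrite mulrC. Qed.

Lemma innerZr a x y : inner x (a *: y) = a * inner x y.
Proof. by rewrite /inner mulr_sumr; apply: eq_bigr => i _; rewrite mxE mulrCA. Qed.

Lemma innerr0 x : inner x 0 = 0.
Proof. by rewrite -(scale0r 0) innerZr mul0r. Qed.

Lemma inner_ge0 x : 0 <= inner x x.
Proof. by apply: sumr_ge0 => i _; rewrite -expr2 sqr_ge0. Qed.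

Lemma inner_eq0 x : inner x x = 0 -> x = 0.
Proof.
move=> /psumr_eq0P x0; apply/matrixP => i j; rewrite (ord1 j) mxE.
by apply/eqP; rewrite -sqrf_eq0 expr2 x0 // => k _; rewrite -expr2 sqr_ge0.
Qed.

Lemma innerBB x y : inner (x - y) (x - y) = inner x x - 2 * inner x y + inner y y.
Proof.
rewrite /inner mulr_sumr -sumrB -big_split /=; apply: eq_bigr => i _.
by rewrite !mxE; ring.
Qed.

Lemma inner_orthogonal M x y : M^T *m M = 1%:M ->
  inner (M *m x) (M *m y) = inner x y.
Proof. by move=> MM; rewrite !innerE trmx_mul -mulmxA (mulmxA M^T) MM mul1mx. Qed.

End inner_product.

(* [compact_cover] needs a pointed space: give [zpt G], pointed at [0], the topology of [G]. *)
HB.instance Definition _ (G : topologicalZmodType) := Topological.copy (zpt G) G.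

Section compact_group.
Context {R : realType} {G : topologicalZmodType}.

Lemma continuous_measurable_preimage {f : G -> R} : continuous f ->
  forall {B : set R}, measurable B -> measurable (f @^-1` B : set (borelType G)).
Proof.
move=> cf B mB.
suff /(_ measurableT B mB) : measurable_fun [set: borelType G] f by rewrite setTI.
apply: (measurability _ (RGenOpens.measurableE R)).
move=> _ [_ [a [b ->] <-]]; rewrite setTI; apply: sub_sigma_algebra.
by move/continuousP : cf; apply; exact: interval_open.
Qed.

Lemma translation_continuous (c : G) : continuous (fun x : G => c + x).
Proof.
move=> x; apply: (@continuous_comp _ _ _ (fun x => (c, x)) (fun x : G * G => x.1 + x.2)).
  by apply: cvg_pair => /=; [exact: cvg_cst|exact: cvg_id].
exact: add_continuous.
Qed.

Context {mu : probability (borelType G) R}.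
Hypothesis compactG : compact [set: G].
Hypothesis mu_invariant : forall (g : G) (A : set (borelType G)), measurable A ->
  mu ((fun h : G => g + h) @^-1` A) = mu A.

Lemma invariant_open_neq0 (U : set G) : open U -> U !=set0 -> mu U != 0%E.
Proof.
move=> oU [u Uu]; apply/eqP => mU0.
pose V (h : G) : set (borelType G) := (fun x => -h + x) @^-1` U.
have oV h : open (V h) by move/continuousP: (translation_continuous (-h)); apply.
have [D _ DV] : finite_subset_cover [set: G] V [set: G].
  have : compact [set: zpt G] := compactG.
  rewrite compact_cover => /(_ G setT V); apply => // x _.
  by exists (x - u) => //; rewrite /V /= opprB addrNK.
have mV h : [set` D] h -> measurable (V h) by move=> _; exact: sub_sigma_algebra.
have := content_sub_fsum mu (finite_fset D) mV measurableT DV.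
rewrite fsbig1 => [|h _]; last by rewrite -mU0; apply: mu_invariant; exact: sub_sigma_algebra.
change ((mu [set: borelType G] <= 0)%E -> False).
by rewrite probability_setT lee_fin ler10.
Qed.

End compact_group.

Section tomography.
Variables (R : realType) (d : nat) (G : topologicalZmodType).
Variables (mu : probability (borelType G) R) (rep : G -> 'M[R]_d).
Hypothesis compactG : compact [set: G].
Hypothesis mu_invariant : forall (g : G) (A : set (borelType G)), measurable A ->
  mu ((fun h : G => g + h) @^-1` A) = mu A.
Hypothesis rep0 : rep 0 = 1%:M.
Hypothesis rep_orthogonal : forall g, (rep g)^T *m rep g = 1%:M.
Hypothesis rep_continuous : forall i j, continuous (fun g => rep g i j).
Implicit Types (I J t v : 'cV[R]_d) (g : G).

Lemma continuous_inner_rep I t : continuous (fun g => inner (rep g *m I) t).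
Proof.
have entry i : continuous (fun g => (rep g *m I) i 0).
  under eq_fun do rewrite mxE.
  apply: (continuous_big add_continuous) => j _ g.
  by apply: continuousM; [exact: rep_continuous | exact: cst_continuous].
apply: (continuous_big add_continuous) => i _ g.
by apply: continuousM; [exact: entry | exact: cst_continuous].
Qed.

Lemma Psi_rep_mulmx (rep_morph : forall g h, rep (g + h) = rep g *m rep h)
    g I t B : measurable B -> Psi mu rep (rep g *m I) t B = Psi mu rep I t B.
Proof.
move=> mB; rewrite /Psi /proj /rho.
have mS := continuous_measurable_preimage (continuous_inner_rep I t) mB.
apply: eq_trans (mu_invariant g _ mS); congr (mu _); apply/funext => h /=.
by rewrite addrC rep_morph mulmxA.
Qed.

Lemma Psi_eq_sym I J : Psi_eq mu rep I J -> Psi_eq mu rep J I.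
Proof. by move=> IJ t st B mB; rewrite IJ. Qed.

Lemma Psi_eq_sphere_gt I J t a : Psi_eq mu rep I J -> sphere t ->
  a < inner J t -> exists g, a < inner (rep g *m I) t.
Proof.
move=> IJ st aJ; apply: contrapT => /forallNP noI.
have mB : measurable [set x : R | a < x] by apply: open_measurable; exact: open_gt.
have muIJ : mu [set g | a < inner (rep g *m I) t] =
            mu [set g | a < inner (rep g *m J) t] := IJ t st _ mB.
have oJ : open [set g | a < inner (rep g *m J) t].
  exact: (continuousP _).1 (continuous_inner_rep J t) _ (@open_gt _ a).
have J0 : [set g | a < inner (rep g *m J) t] 0 by rewrite /= rep0 mul1mx.
have /eqP[] := invariant_open_neq0 compactG mu_invariant _ oJ (ex_intro _ 0 J0).
rewrite -muIJ -(measure0 mu); congr (mu _).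
by apply/seteqP; split => // g /noI.
Qed.

Lemma Psi_eq_inner_gt I J v a : Psi_eq mu rep I J ->
  a < inner J v -> exists g, a < inner (rep g *m I) v.
Proof.
move=> IJ aJ; have [v0|v_neq0] := eqVneq v 0.
  by exists 0; move: aJ; rewrite v0 !innerr0.
have vv_gt0 : 0 < inner v v.
  by rewrite lt_def inner_ge0 andbT; apply: contra_neq v_neq0; exact: inner_eq0.
set c := Num.sqrt (inner v v).
have c_gt0 : 0 < c by rewrite sqrtr_gt0.
have inner_unit x : inner x (c^-1 *: v) = inner x v / c by rewrite innerZr mulrC.
have unit_sphere : sphere (c^-1 *: v).
  rewrite /sphere /= innerZr innerC innerZr -(sqr_sqrtr (inner_ge0 v)) -/c.
  by field; rewrite gt_eqF.
have [|g ag] := Psi_eq_sphere_gt _ _ _ (a / c) IJ unit_sphere.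
  by rewrite inner_unit ltr_pM2r ?invr_gt0.
by exists g; move: ag; rewrite inner_unit ltr_pM2r ?invr_gt0.
Qed.

Lemma Psi_eq_inner_le I J : Psi_eq mu rep I J -> inner J J <= inner I I.
Proof.
move=> IJ; apply/ler_addgt0Pr => e e_gt0.
have [g Jg] : exists g, inner J J - e / 2 < inner (rep g *m I) J.
  by apply: Psi_eq_inner_gt IJ _; rewrite gtrBl divr_gt0.
have := inner_ge0 (rep g *m I - J).
rewrite innerBB inner_orthogonal //; lra.
Qed.

Lemma Psi_eq_orbit_equiv I J : Psi_eq mu rep I J -> orbit_equiv rep I J.
Proof.
move=> IJ; have II_JJ : inner I I = inner J J.
  by apply/le_anti; rewrite !Psi_eq_inner_le //; exact: Psi_eq_sym.
pose f g := 2 * inner J J - 2 * inner (rep g *m I) J.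
have fE g : inner (rep g *m I - J) (rep g *m I - J) = f g.
  by rewrite innerBB inner_orthogonal // II_JJ /f; ring.
have f_cont : continuous f.
  move=> g; apply: (@continuousB _ R^o G (fun=> 2 * inner J J)
                                  (fun g => 2 * inner (rep g *m I) J)).
    exact: cst_continuous.
  by apply: continuousM; [exact: cst_continuous | exact: continuous_inner_rep].
have [c _ c_min] := compact_EVT_min (ex_intro _ 0 Logic.I) compactG
  (continuous_subspaceT f_cont).
exists c; apply/eqP; rewrite -subr_eq0; apply/eqP/inner_eq0.
apply/le_anti; rewrite inner_ge0 andbT fE; apply/ler_addgt0Pr => e e_gt0.
have [g Jg] : exists g, inner J J - e / 2 < inner (rep g *m I) J.
  by apply: Psi_eq_inner_gt IJ _; rewrite gtrBl divr_gt0.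
by apply: le_trans (c_min g _) _; [exact: in_setT | rewrite /f; lra].
Qed.

Lemma orbit_equiv_Psi_eq (rep_morph : forall g h, rep (g + h) = rep g *m rep h)
    I J : orbit_equiv rep I J -> Psi_eq mu rep I J.
Proof. by move=> [g <-] t _ B mB; rewrite Psi_rep_mulmx. Qed.

End tomography.

Theorem theorem3 (R : realType) (d : nat) (G : topologicalZmodType)
    (mu : probability (borelType G) R) (rep : G -> 'M[R]_d) :
  compact [set: G] -> hausdorff_space G ->
  haar_prob mu -> unitary_rep rep ->
  forall I I' : 'cV[R]_d, orbit_equiv rep I I' <-> Psi_eq mu rep I I'.
Proof.
move=> compactG _ [mu_invariant _ _] [rep0 rep_morph rep_orthogonal rep_continuous] I I'.
split; first exact: orbit_equiv_Psi_eq.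
exact: Psi_eq_orbit_equiv.
Qed.
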